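(* Let $r\ge1$, let $\mu=\langle\mu_1,\dots,\mu_{r+1}\rangle\in\mathbb{Z}^{r+1}$ with $\sum_i\mu_i=0$, and let $\Lambda\subseteq\Phi^+_{A_r}$. Let $\mathcal{T}=\Gamma(\Lambda)=\{T_{i,j}:\varepsilon_i-\varepsilon_{i+j}\in\Lambda\}$. Then $P_\Lambda(\mu)$ is in bijection with $\mathrm{JS}_{\mathcal{T}}(\langle\mu_1,\dots,\mu_r\rangle,\langle\mu_1+\cdots+\mu_r\rangle,r)$ (via juggling sequence $\mapsto$ multiset of roots $\varepsilon_i-\varepsilon_{i+j}$, one per throw at time $i$ to height $j$), and \[K_\Lambda(\mu)=\mathsf{js}_{\mathcal{T}}(\langle\mu_1,\dots,\mu_r\rangle,\langle\mu_1+\cdots+\mu_r\rangle,r).\]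
   Context: A juggling state is a finitely supported integer vector $\mathbf{s}=\langle s_1,s_2,\dots\rangle$ indexed by heights (trailing zeros omitted; negative entries are magic balls). A juggling sequence of length $n$ from $\mathbf{a}$ to $\mathbf{b}$ is a sequence $(\mathbf{s}_0,\dots,\mathbf{s}_n)$ with $\mathbf{s}_0=\mathbf{a}$, $\mathbf{s}_n=\mathbf{b}$, such that for each $1\le i\le n$ there are nonnegative integers $c^{(i)}_k$ (finitely many nonzero) with $\sum_k c^{(i)}_k=(\mathbf{s}_{i-1})_1$ and $(\mathbf{s}_i)_k=(\mathbf{s}_{i-1})_{k+1}+c^{(i)}_k$ for all $k\ge1$; $c^{(i)}_j$ is the number of throws at time $i$ to height $j$, and $T_{i,j}$ denotes ''a throw at time $i$ to height $j$''. For a set $\mathcal{T}$ of throws, $\mathrm{JS}_{\mathcal{T}}(\mathbf{a},\mathbf{b},n)$ is the set of juggling sequences in which $c^{(i)}_j>0$ only if $T_{i,j}\in\mathcal{T}$, and $\mathsf{js}_{\mathcal{T}}$ its cardinality. $\Phi^+_{A_r}=\{\varepsilon_i-\varepsilon_j:1\le i<j\le r+1\}\subset\mathbb{R}^{r+1}$; for $\Lambda\subseteq\Phi^+_{A_r}$, $P_\Lambda(\mu)$ is the set of finite multisets of elements of $\Lambda$ summing to $\mu$ and $K_\Lambda(\mu)=|P_\Lambda(\mu)|$. *)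

From HB Require Import structures.
From mathcomp Require Import all_boot all_order all_algebra.
Set Implicit Arguments.
Unset Strict Implicit.
Unset Printing Implicit Defensive.
Import Order.TTheory GRing.Theory Num.Theory.
Local Open Scope ring_scope.

(* A juggling state is stored as the sequence [s_1; s_2; ...] of its entries
   (heights 1,2,...), in canonical form: no trailing zeros. *)
Definition jstate := seq int.

Definition height (s : jstate) (k : nat) : int := nth 0 s k.-1.

Definition canon (s : jstate) : bool := last 1 s != 0.

Definition same_state (s t : jstate) : Prop :=
  forall k : nat, (0 < k)%N -> height s k = height t k.

Definition throws := nat -> nat -> bool.

Definition throw_step (T : throws) (i : nat) (s s' : jstate) : Prop :=
  exists (c : nat -> nat) (N : nat),
    (forall k, (N < k)%N -> c k = 0%N) /\
    \sum_(1 <= k < N.+1) (c k)%:Z = height s 1 /\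
    (forall k, (0 < k)%N -> height s' k = height s k.+1 + (c k)%:Z) /\
    (forall k, (0 < k)%N -> (0 < c k)%N -> T i k).

Definition JS (T : throws) (a b : jstate) (n : nat) (ss : seq jstate) : Prop :=
  size ss = n.+1 /\
  all canon ss /\
  same_state (nth [::] ss 0) a /\
  same_state (nth [::] ss n) b /\
  (forall i, (1 <= i <= n)%N -> throw_step T i (nth [::] ss i.-1) (nth [::] ss i)).

(* Coordinates of R^{r+1} are indexed by 'I_r.+1 (ordinal k stands for
   epsilon_{k+1}).  The pair p = (i, j) with i < j stands for the positive
   root epsilon_{i+1} - epsilon_{j+1}. *)
Definition posroots (r : nat) : {set 'I_r.+1 * 'I_r.+1} :=
  [set p : 'I_r.+1 * 'I_r.+1 | (p.1 < p.2)%N].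

Definition root_vec (r : nat) (p : 'I_r.+1 * 'I_r.+1) (k : 'I_r.+1) : int :=
  (k == p.1)%:Z - (k == p.2)%:Z.

Definition multiset (r : nat) := {ffun 'I_r.+1 * 'I_r.+1 -> nat}.

Definition P_Lambda (r : nat) (Lam : {set 'I_r.+1 * 'I_r.+1})
    (mu : 'I_r.+1 -> int) (m : multiset r) : Prop :=
  (forall p, (0 < m p)%N -> p \in Lam) /\
  (forall k : 'I_r.+1, \sum_(p : 'I_r.+1 * 'I_r.+1) (m p)%:Z * root_vec p k = mu k).

Definition Gamma (r : nat) (Lam : {set 'I_r.+1 * 'I_r.+1}) : throws :=
  fun i j => [&& (0 < i)%N, (0 < j)%N &
              [exists p in Lam, ((p.1 : nat) == i.-1) && ((p.2 : nat) == (i + j).-1)]].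

(* The map: juggling sequence |-> multiset of roots eps_i - eps_{i+j}, with
   multiplicity c^{(i)}_j = (s_i)_j - (s_{i-1})_{j+1}, the number of throws at
   time i to height j. *)
Definition js_to_multiset (r : nat) (ss : seq jstate) : multiset r :=
  [ffun p : 'I_r.+1 * 'I_r.+1 =>
     if (p.1 < p.2)%N then
       let i := (p.1 : nat).+1 in
       let j := ((p.2 : nat) - p.1)%N in
       `| height (nth [::] ss i) j - height (nth [::] ss i.-1) j.+1 |%N
     else 0%N].

Definition has_card (T : eqType) (P : T -> Prop) (k : nat) : Prop :=
  exists l : seq T, [/\ uniq l, size l = k & forall x, P x <-> x \in l].

Definition start_state (r : nat) (mu : 'I_r.+1 -> int) : jstate :=
  [seq mu (inord i) | i <- iota 0 r].
Definition end_state (r : nat) (mu : 'I_r.+1 -> int) : jstate :=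
  [:: \sum_(i < r.+1 | (i < r)%N) mu i].

From HB Require Import structures.
From mathcomp Require Import all_boot all_order all_algebra zify.
Import Order.TTheory GRing.Theory Num.Theory.
Local Open Scope ring_scope.
Set Implicit Arguments.
Unset Strict Implicit.

(* A juggling sequence of length r is determined by its throw counts c^(i)_j, and
   recording c^(i)_j as the multiplicity of eps_i - eps_(i+j) turns these counts
   into a multiset of positive roots. Conversely the states are recovered from the
   multiset: the entry at height k after time i is mu_(i+k) plus the number of
   throws made up to time i that land at time i + k. Under this dictionary, "all
   balls at height 1 are thrown at time i" is coordinate i of the Kostant equation,
   the final state <mu_1 + ... + mu_r> is its last coordinate (as sum mu = 0), and
   T_(i,j) lies in Gamma(Lambda) exactly when the root lies in Lambda. P_Lambda(mu)
   is finite because every multiplicity is at most -sum_k k mu_k. *)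

Lemma canon_same_state_eq (s t : jstate) :
  canon s -> canon t -> same_state s t -> s = t.
Proof.
move=> cs ct st.
have nth_eq i : nth 0 s i = nth 0 t i by have := st i.+1 isT.
have size_le (u v : jstate) : canon u -> (forall i, nth 0 u i = nth 0 v i) ->
    (size u <= size v)%N.
  move=> cu uv; rewrite leqNgt; apply/negP => lt_vu.
  have : nth 0 u (size u).-1 != 0.
    by case: u cu lt_vu uv => [|x u] //= cu _ _; rewrite -(last_nth 0).
  by rewrite uv nth_default ?eqxx //; move: lt_vu; case: (size u) => //= n; lia.
apply: (eq_from_nth (x0 := 0)) => [|i _]; last exact: nth_eq.
by apply/eqP; rewrite eqn_leq !size_le.
Qed.

Fixpoint trim0 (s : seq int) : seq int :=
  if s is x :: s' then
    let t := trim0 s' in if (t == [::]) && (x == 0) then [::] else x :: t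
  else [::].

Lemma nth_trim0 s k : nth 0 (trim0 s) k = nth 0 s k.
Proof.
elim: s k => [|x s IH] k //=.
case: ifP => [/andP[/eqP t0 /eqP ->]|_]; last by case: k.
by case: k => [|k] //=; rewrite -IH t0 nth_nil.
Qed.

Lemma canon_trim0 s : canon (trim0 s).
Proof.
rewrite /canon; elim: s => [|x s IH] //=.
by case: ifP => // /negbT; case: (trim0 s) IH => //= _ _ /eqP.
Qed.

Definition state_of (f : nat -> int) (n : nat) : jstate :=
  trim0 (mkseq (fun k => f k.+1) n).

Lemma height_state_of f n k : (0 < k)%N ->
  height (state_of f n) k = if (k <= n)%N then f k else 0.
Proof.
move=> k_gt0; rewrite /height /state_of nth_trim0.
case: ifP => k_le; first by rewrite nth_mkseq ?prednK //; lia.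
by rewrite nth_default // size_mkseq; lia.
Qed.

Lemma canon_state_of f n : canon (state_of f n).
Proof. exact: canon_trim0. Qed.

Lemma sum_nat_widen0 (R : nmodType) (F : nat -> R) (m n1 n2 : nat) :
  (n1 <= n2)%N -> (forall k, (n1 <= k < n2)%N -> F k = 0) ->
  \sum_(m <= k < n2) F k = \sum_(m <= k < n1) F k.
Proof.
move=> n12 F0; rewrite (big_nat_widen m _ _ xpredT F n12) [RHS]big_mkcond.
apply: eq_big_nat => k /andP [_ k_lt]; case: ltnP => // ?.
by rewrite F0 // k_lt andbT.
Qed.

Lemma has_card_transfer (T U : eqType) (P : T -> Prop) (Q : U -> Prop)
    (f : T -> U) (g : U -> T) (k : nat) :
  (forall x, P x -> Q (f x)) -> (forall x, P x -> g (f x) = x) ->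
  (forall y, Q y -> P (g y) /\ f (g y) = y) ->
  has_card P k -> has_card Q k.
Proof.
move=> PQ fK gK [l [l_uniq <- Pl]]; exists (map f l); split.
- by rewrite map_inj_in_uniq // => x1 x2 /Pl/fK {2}<- /Pl/fK {2}<- ->.
- by rewrite size_map.
move=> y; split => [/gK [/Pl gy_l <-]|/mapP [x /Pl Px ->]]; [exact: map_f|exact: PQ].
Qed.

Lemma has_card_bounded_ffun (A : finType) (P : {ffun A -> nat} -> Prop)
    (p : pred {ffun A -> nat}) (B : nat) :
  (forall m, reflect (P m) (p m)) -> (forall m, P m -> forall a, (m a <= B)%N) ->
  exists k, has_card P k.
Proof.
move=> Pp bounded.
pose widen (f : {ffun A -> 'I_B.+1}) : {ffun A -> nat} := [ffun a => nat_of_ord (f a)].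
eexists; exists [seq m <- map widen (enum {ffun A -> 'I_B.+1}) | p m]; split => //.
  apply: filter_uniq; rewrite map_inj_uniq ?enum_uniq // => f g /ffunP fg.
  by apply/ffunP => a; apply: val_inj; have := fg a; rewrite !ffunE.
move=> m; rewrite mem_filter; split => [Pm|/andP [/Pp //]].
rewrite (introT (Pp m) Pm); apply/mapP; exists [ffun a => inord (m a)].
  by rewrite mem_enum.
apply/ffunP => a; by rewrite /widen !ffunE inordK // ltnS bounded.
Qed.

Lemma root_vec_sum r (m : multiset r) (k : 'I_r.+1) :
  \sum_p (m p)%:Z * root_vec p k =
  \sum_(b < r.+1) (m (k, b))%:Z - \sum_(a < r.+1) (m (a, k))%:Z.
Proof.
have pair_sum (F : 'I_r.+1 * 'I_r.+1 -> int) :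
    \sum_p F p = \sum_(a < r.+1) \sum_(b < r.+1) F (a, b).
  by rewrite pair_big; apply: eq_bigr => -[].
have pick (S : 'I_r.+1 -> int) : \sum_a S a * (k == a)%:Z = S k.
  rewrite (bigD1 k) //= eqxx mulr1 big1 ?addr0 // => a.
  by rewrite eq_sym => /negbTE ->; rewrite mulr0.
rewrite /root_vec; under eq_bigr do rewrite mulrBr.
rewrite sumrB !pair_sum /= [in X in _ - X]exchange_big /=.
under eq_bigr do rewrite -mulr_suml.
under [X in _ - X]eq_bigr do rewrite -mulr_suml.
by rewrite !pick.
Qed.

Lemma P_Lambda_mult_le r (Lam : {set 'I_r.+1 * 'I_r.+1}) (mu : 'I_r.+1 -> int)
    (m : multiset r) (p0 : 'I_r.+1 * 'I_r.+1) :
  Lam \subset posroots r -> P_Lambda Lam mu m ->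
  (m p0 <= `|(\sum_(k < r.+1) (k : nat)%:Z * mu k)%R|)%N.
Proof.
(* Weighting coordinate k by k sends every positive root to a negative integer. *)
move=> LamP [m_Lam m_mu].
pose gap (p : 'I_r.+1 * 'I_r.+1) : int := (p.1 : nat)%:Z - (p.2 : nat)%:Z.
have pick (i : 'I_r.+1) : \sum_(k < r.+1) (k : nat)%:Z * (k == i)%:Z = (i : nat)%:Z.
  rewrite (bigD1 i) //= eqxx mulr1 big1 ?addr0 // => k /negbTE ->.
  by rewrite mulr0.
have weighted : \sum_(k < r.+1) (k : nat)%:Z * mu k = \sum_p (m p)%:Z * gap p.
  under eq_bigr do rewrite -m_mu mulr_sumr.
  rewrite exchange_big; apply: eq_bigr => p _ /=.
  under eq_bigr do rewrite mulrCA.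
  rewrite -mulr_sumr /root_vec; congr (_ * _).
  under eq_bigr do rewrite mulrBr.
  by rewrite sumrB !pick.
have term_le p : (m p)%:Z * gap p <= - (m p)%:Z.
  case E: (m p) => [|n]; first by rewrite mul0r oppr0.
  have /(subsetP LamP) : p \in Lam by apply: m_Lam; rewrite E.
  by rewrite inE /gap; nia.
have : (m p0)%:Z <= - \sum_(k < r.+1) (k : nat)%:Z * mu k.
  rewrite weighted (bigD1 p0) //= opprD -[X in X <= _]addr0.
  apply: lerD; first by rewrite lerNr.
  rewrite oppr_ge0; apply: sumr_le0 => p _.
  by apply: le_trans (term_le p) _; rewrite oppr_le0.
lia.
Qed.

Lemma P_LambdaP r (Lam : {set 'I_r.+1 * 'I_r.+1}) (mu : 'I_r.+1 -> int) (m : multiset r) :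
  reflect (P_Lambda Lam mu m)
    ([forall p, (0 < m p)%N ==> (p \in Lam)] &&
     [forall k, \sum_p (m p)%:Z * root_vec p k == mu k]).
Proof.
apply: (iffP andP) => [[/forallP m_Lam /forallP m_mu]|[m_Lam m_mu]]; split.
- by move=> p; apply/implyP.
- by move=> k; apply/eqP.
- by apply/forallP => p; apply/implyP/m_Lam.
- by apply/forallP => k; apply/eqP.
Qed.

Section KostantJuggling.
Variables (r : nat) (mu : 'I_r.+1 -> int) (Lam : {set 'I_r.+1 * 'I_r.+1}).
Hypothesis hmu : \sum_(i < r.+1) mu i = 0.
Hypothesis hLam : Lam \subset posroots r.

Definition start_coord (q : nat) : int := if (q < r)%N then mu (inord q) else 0.

(* Multiplicity of eps_(a+1) - eps_(b+1): coordinates are 0-based here. *)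
Definition mult (m : multiset r) (a b : nat) : int :=
  if (a < b <= r)%N then (m (inord a, inord b))%:Z else 0.

Definition out_mult (m : multiset r) (a : nat) : int := \sum_(b < r.+1) mult m a b.

(* The balls due to land at time q + 1 after time i: the mu_(q+1) balls of the
   start state plus those thrown at times 1, ..., i that land then. This is the
   entry at height q + 1 - i of the i-th state. *)
Definition profile (m : multiset r) (i q : nat) : int :=
  start_coord q + \sum_(a < i) mult m a q.

Lemma mult_ge0 m a b : 0 <= mult m a b.
Proof. by rewrite /mult; case: ifP. Qed.

Lemma mult_out m a b : (b <= a)%N || (r < b)%N -> mult m a b = 0.
Proof.
by rewrite /mult; case: ifP => // /andP [ab br]; rewrite leqNgt ab ltnNge br.
Qed.

Lemma mult_ord (m : multiset r) (a b : 'I_r.+1) :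
  (forall p, (0 < m p)%N -> p \in Lam) -> (m (a, b))%:Z = mult m a b.
Proof.
move=> m_Lam; rewrite /mult (leq_ord b) andbT !inord_val.
case: ifP => // /negbT ab; case E: (m (a, b)) => [|n] //.
have /(subsetP hLam) : (a, b) \in Lam by apply: m_Lam; rewrite E.
by rewrite inE (negbTE ab).
Qed.

Lemma out_mult_shift m a :
  out_mult m a = \sum_(1 <= j < r.+1) mult m a (a + j)%N.
Proof.
transitivity (\sum_(0 <= b < r.+1 + a) mult m a b).
  rewrite (@big_cat_nat _ _ _ r.+1) ?leq_addr //= big_mkord.
  rewrite [X in _ + X]big1_seq ?addr0 // => b /andP [_].
  by rewrite mem_index_iota => /andP [rb _]; rewrite mult_out // rb orbT.
rewrite (@big_cat_nat _ _ _ a.+1) //=; last by rewrite addSn ltnS leq_addl.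
rewrite big1_seq ?add0r => [|b /andP [_]]; last first.
  by rewrite mem_index_iota => /andP [_ ba]; rewrite mult_out // -ltnS ba.
rewrite -{1}[a.+1]add1n big_addn addnK.
by apply: eq_bigr => j _; rewrite addnC.
Qed.

Lemma root_vec_sum_mult (m : multiset r) (k : 'I_r.+1) :
  (forall p, (0 < m p)%N -> p \in Lam) ->
  \sum_p (m p)%:Z * root_vec p k = out_mult m k - \sum_(a < k) mult m a k.
Proof.
move=> m_Lam; rewrite root_vec_sum /out_mult.
congr (_ - _); first by apply: eq_bigr => b _; rewrite mult_ord.
rewrite (big_ord_widen r.+1 (mult m ^~ k) (ltnW (ltn_ord k))) [RHS]big_mkcond.
apply: eq_bigr => a _; rewrite mult_ord //.
by case: (ltnP a k) => // ka; rewrite mult_out ?ka.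
Qed.

Lemma out_mult_last m : out_mult m r = 0.
Proof. by rewrite /out_mult big1 // => b _; rewrite mult_out // -ltnS ltn_ord. Qed.

(* Coordinate a < r of the Kostant equation says that the balls thrown at time
   a + 1 are exactly those at height 1; the last coordinate is the final state. *)
Lemma P_Lambda_profileE (m : multiset r) :
  (forall p, (0 < m p)%N -> p \in Lam) ->
  P_Lambda Lam mu m <->
  (forall a, (a < r)%N -> out_mult m a = profile m a a) /\
  profile m r r = - mu ord_max.
Proof.
move=> m_Lam; rewrite /P_Lambda /profile /start_coord ltnn add0r; split.
  move=> [_ m_mu]; split => [a ar|].
    have := m_mu (inord a); rewrite root_vec_sum_mult // inordK; last by rewrite ltnS ltnW.
    by rewrite ar => <-; rewrite subrK.
  by have := m_mu ord_max; rewrite root_vec_sum_mult //= out_mult_last sub0r => <-; rewrite opprK.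
move=> [m_out m_last]; split => // k; rewrite root_vec_sum_mult //.
case: (ltnP k r) => kr.
  by rewrite m_out // kr inord_val addrK.
have -> : k = ord_max by apply/val_inj/eqP; rewrite eqn_leq kr -ltnS ltn_ord.
by rewrite out_mult_last sub0r m_last opprK.
Qed.

Lemma profile_succ m i q : profile m i.+1 q = profile m i q + mult m i q.
Proof. by rewrite /profile big_ord_recr addrA. Qed.

Lemma profile_out m i q : (r < q)%N -> profile m i q = 0.
Proof.
move=> rq; rewrite /profile /start_coord ltnNge ltnW // add0r.
by rewrite big1 // => a _; rewrite mult_out // rq orbT.
Qed.

Definition juggling_state (m : multiset r) (i : nat) : jstate :=
  state_of (fun k => profile m i (i + k)%N.-1) r.+1.

Definition juggling_of (m : multiset r) : seq jstate := mkseq (juggling_state m) r.+1.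

Lemma height_juggling_state m i k : (0 < k)%N ->
  height (juggling_state m i) k = profile m i (i + k)%N.-1.
Proof.
move=> k_gt0; rewrite height_state_of //.
case: ifP => // /negbT; rewrite -ltnNge => rk.
by rewrite profile_out // -ltnS prednK ?ltn_addl // addn_gt0 k_gt0 orbT.
Qed.

Lemma height_juggling_state_succ m a k : (0 < k)%N ->
  height (juggling_state m a.+1) k = height (juggling_state m a) k.+1 + mult m a (a + k)%N.
Proof. by move=> k_gt0; rewrite !height_juggling_state // addSn addnS profile_succ. Qed.

Lemma nth_juggling_of m i : (i <= r)%N -> nth [::] (juggling_of m) i = juggling_state m i.
Proof. by move=> ir; rewrite nth_mkseq. Qed.

Lemma height_start_state k : (0 < k)%N -> height (start_state mu) k = start_coord k.-1.
Proof.
move=> k_gt0; rewrite /height /start_state /start_coord.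
case: ifP => kr; first by rewrite (nth_map 0%N) ?size_iota // nth_iota.
by rewrite nth_default // size_map size_iota leqNgt kr.
Qed.

Lemma height_end_state k : (0 < k)%N ->
  height (end_state mu) k = if k == 1%N then - mu ord_max else 0.
Proof.
case: k => [|[|k]] // _; rewrite /height /end_state /=; last by rewrite nth_nil.
move/eqP: hmu; rewrite (bigD1 ord_max) //= addrC addr_eq0 => /eqP <-.
by apply: eq_bigl => i; rewrite -val_eqE /= ltn_neqAle -ltnS ltn_ord andbT.
Qed.

Section Backward.
Variable m : multiset r.
Hypothesis Pm : P_Lambda Lam mu m.

Lemma throw_step_juggling_state a : (a < r)%N ->
  throw_step (Gamma Lam) a.+1 (juggling_state m a) (juggling_state m a.+1).
Proof.
move=> ar; have [m_Lam _] := Pm.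
exists (fun k => `|mult m a (a + k)%N|%N), r; split; [|split; [|split]].
- by move=> k rk; rewrite mult_out // ltn_addl ?orbT.
- rewrite height_juggling_state // addn1 -(proj1 (P_Lambda_profileE m_Lam) Pm).1 //.
  by rewrite out_mult_shift; apply: eq_bigr => k _; rewrite gez0_abs ?mult_ge0.
- by move=> k k_gt0; rewrite height_juggling_state_succ // gez0_abs ?mult_ge0.
move=> k k_gt0; rewrite lt0n absz_eq0 /mult; case: ifP => [/andP [ak akr]|]; last by rewrite eqxx.
rewrite eqz_nat -lt0n => /m_Lam pLam; apply/and3P; split => //.
have [a_lt ak_lt] : (a < r.+1)%N /\ (a + k < r.+1)%N := conj (ltnW ar) akr.
by apply/existsP; exists (inord a, inord (a + k)%N); rewrite pLam /= !inordK // !eqxx.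
Qed.

Lemma juggling_of_JS : JS (Gamma Lam) (start_state mu) (end_state mu) r (juggling_of m).
Proof.
have [_ m_last] := proj1 (P_Lambda_profileE (proj1 Pm)) Pm.
split; first by rewrite size_mkseq.
split; first by apply/allP => s /mapP [i _ ->]; apply: canon_state_of.
split.
  move=> k k_gt0; rewrite nth_juggling_of // height_juggling_state //.
  by rewrite height_start_state // /profile big_ord0 addr0.
split.
  case=> [|[|k]] // _; rewrite nth_juggling_of // height_juggling_state // height_end_state //.
    by rewrite addn1.
  by rewrite profile_out // !addnS ltnS leq_addr.
case=> // a /andP [_ ar]; have a_le := ltnW ar.
by rewrite !nth_juggling_of //; apply: throw_step_juggling_state.
Qed.

Lemma juggling_ofK : js_to_multiset r (juggling_of m) = m.
Proof.
apply/ffunP => -[x y]; rewrite ffunE -[(x, y).1]/x -[(x, y).2]/y; cbv zeta.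
case: ifP => xy; last first.
  case E: (m (x, y)) => [|n] //.
  have /(subsetP hLam) : (x, y) \in Lam by apply: (proj1 Pm); rewrite E.
  by rewrite inE xy.
have x_lt : (x < r)%N by apply: leq_trans xy _; rewrite -ltnS.
rewrite !nth_juggling_of ?(ltnW x_lt) //.
rewrite height_juggling_state_succ ?subn_gt0 // [x.+1.-1]/= addrC addKr subnKC; last exact: ltnW.
by rewrite -(mult_ord x y (proj1 Pm)) absz_nat.
Qed.
End Backward.

Section Forward.
Variable ss : seq jstate.
Hypothesis JSss : JS (Gamma Lam) (start_state mu) (end_state mu) r ss.

Local Notation S i := (nth [::] ss i).
Local Notation throws a k := (height (S a.+1) k - height (S a) k.+1).
Local Notation m := (js_to_multiset r ss).

Lemma JS_throw_step a : (a < r)%N -> throw_step (Gamma Lam) a.+1 (S a) (S a.+1).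
Proof. by move=> ar; have [_ [_ [_ [_ steps]]]] := JSss; apply: steps. Qed.

Lemma JS_throws_ge0 a k : (a < r)%N -> (0 < k)%N -> 0 <= throws a k.
Proof.
move=> ar k_gt0; have [c [_ [_ [_ [c_throws _]]]]] := JS_throw_step ar.
by rewrite (c_throws k k_gt0) addrAC subrr add0r.
Qed.

Lemma JS_throws_Lam a k : (a < r)%N -> (0 < k)%N -> throws a k != 0 ->
  (a + k <= r)%N /\ ((inord a, inord (a + k)%N) : 'I_r.+1 * 'I_r.+1) \in Lam.
Proof.
move=> ar k_gt0; have [c [_ [_ [_ [c_throws c_Gamma]]]]] := JS_throw_step ar.
rewrite (c_throws k k_gt0) addrAC subrr add0r eqz_nat -lt0n => /(c_Gamma k k_gt0).
case/and3P => _ _ /existsP [[x y] /andP [xyLam /andP [/eqP ex /eqP ey]]].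
have {}ex : x = a :> nat := ex.
have {}ey : y = (a + k)%N :> nat := ey.
split; first by rewrite -ey -ltnS ltn_ord.
by rewrite -ey -ex !inord_val.
Qed.

Lemma mult_js_to_multiset a k : (a < r)%N -> (0 < k)%N -> mult m a (a + k)%N = throws a k.
Proof.
move=> ar k_gt0; case: (leqP (a + k)%N r) => akr; last first.
  rewrite mult_out ?akr ?orbT //; apply/esym/eqP/negPn/negP => nz.
  by have [] := JS_throws_Lam ar k_gt0 nz; rewrite leqNgt akr.
have [a_lt ak_lt] : (a < r.+1)%N /\ (a + k < r.+1)%N := conj (ltnW ar) akr.
have ak : (a < a + k)%N by rewrite -addn1 leq_add2l.
rewrite /mult ak akr ffunE !inordK //= ak addKn.
by rewrite gez0_abs ?JS_throws_ge0.
Qed.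

Lemma out_mult_JS a : (a < r)%N -> out_mult m a = height (S a) 1.
Proof.
move=> ar; have [c [N [c_out [c_sum [c_throws _]]]]] := JS_throw_step ar.
have c_mult k : (0 < k)%N -> mult m a (a + k)%N = (c k)%:Z.
  by move=> k_gt0; rewrite mult_js_to_multiset // c_throws // addrAC subrr add0r.
have c_zero k : (r < k)%N -> c k = 0%N.
  move=> rk; apply/eqP; rewrite -eqz_nat -c_mult; last exact: leq_ltn_trans rk.
  by rewrite mult_out // ltn_addl ?orbT.
rewrite out_mult_shift -c_sum.
transitivity (\sum_(1 <= k < (N + r).+1) (c k)%:Z).
  have rN : (r.+1 <= (N + r).+1)%N by rewrite ltnS leq_addl.
  rewrite [RHS](sum_nat_widen0 _ rN) => [|k /andP [rk _]]; last by rewrite c_zero.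
  by apply: eq_big_nat => k /andP [k_gt0 _]; rewrite c_mult.
have NN : (N.+1 <= (N + r).+1)%N by rewrite ltnS leq_addr.
by rewrite (sum_nat_widen0 _ NN) // => k /andP [Nk _]; rewrite c_out.
Qed.

Lemma height_JS i k : (i <= r)%N -> (0 < k)%N ->
  height (S i) k = profile m i (i + k)%N.-1.
Proof.
elim: i k => [|i IH] k ir k_gt0.
  have [_ [_ [start _]]] := JSss.
  by rewrite start // height_start_state // /profile big_ord0 addr0.
have := IH k.+1 (ltnW ir) isT; rewrite addnS -pred_Sn => IHk.
rewrite profile_succ -IHk mult_js_to_multiset //.
by rewrite addrC subrK.
Qed.

Lemma JS_P_Lambda : P_Lambda Lam mu m.
Proof.
have m_Lam p : (0 < m p)%N -> p \in Lam.
  case: p => x y; rewrite ffunE -[(x, y).1]/x -[(x, y).2]/y; cbv zeta.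
  case: ifP => // xy; rewrite [x.+1.-1]/= lt0n absz_eq0 => nz.
  have x_lt : (x < r)%N by apply: leq_trans xy _; rewrite -ltnS.
  have [] := JS_throws_Lam x_lt _ nz; first by rewrite subn_gt0.
  by rewrite subnKC ?(ltnW xy) // !inord_val.
apply/(P_Lambda_profileE m_Lam); split.
  by move=> a ar; rewrite out_mult_JS // height_JS ?(ltnW ar) // addn1.
have [_ [_ [_ [end_ss _]]]] := JSss.
by have := end_ss 1 isT; rewrite height_end_state // height_JS // addn1 /= => <-.
Qed.

Lemma js_to_multisetK : ss = juggling_of m.
Proof.
have [size_ss [canon_ss _]] := JSss.
apply: (eq_from_nth (x0 := [::])); first by rewrite size_mkseq.
move=> i; rewrite size_ss ltnS => ir.
rewrite nth_juggling_of //; apply: canon_same_state_eq.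
- by apply: (allP canon_ss); rewrite mem_nth // size_ss.
- exact: canon_state_of.
by move=> k k_gt0; rewrite height_JS // height_juggling_state.
Qed.
End Forward.
End KostantJuggling.

Theorem mainTheorem6 (r : nat) (hr : (1 <= r)%N) (mu : 'I_r.+1 -> int)
    (hmu : \sum_(i < r.+1) mu i = 0)
    (Lam : {set 'I_r.+1 * 'I_r.+1}) (hLam : Lam \subset posroots r) :
  let T := Gamma Lam in
  let JSset := JS T (start_state mu) (end_state mu) r in
  [/\ (forall ss, JSset ss -> P_Lambda Lam mu (js_to_multiset r ss)),
      (forall ss1 ss2, JSset ss1 -> JSset ss2 ->
          js_to_multiset r ss1 = js_to_multiset r ss2 -> ss1 = ss2),
      (forall m, P_Lambda Lam mu m -> exists2 ss, JSset ss & js_to_multiset r ss = m)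
    & exists k : nat, has_card (P_Lambda Lam mu) k /\ has_card JSset k].
Proof.
(* The argument does not need [hr]. *)
rewrite /=; split.
- exact: JS_P_Lambda hmu hLam.
- move=> ss1 ss2 JS1 JS2 same_m.
  by rewrite (js_to_multisetK JS1) (js_to_multisetK JS2) same_m.
- move=> m Pm; exists (juggling_of mu m).
    exact: (juggling_of_JS hmu hLam Pm).
  exact: (juggling_ofK hLam Pm).
have [k card_P] := has_card_bounded_ffun (@P_LambdaP r Lam mu)
  (fun m Pm p => P_Lambda_mult_le p hLam Pm).
exists k; split => //; apply: (has_card_transfer (f := juggling_of mu)) card_P.
- exact: (juggling_of_JS hmu hLam).
- exact: (juggling_ofK hLam).
move=> ss JS_ss; split; first exact: (JS_P_Lambda hmu hLam JS_ss).
by rewrite -(js_to_multisetK JS_ss).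
Qed.
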